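(* Let $h$ be odd and let $\psi$ be an additive character of $\mathbb{F}_{q^2}$ of conductor $q^2$. If $\nu$ is a character of $H'$ whose restriction to $H_0'$ is $\widetilde\psi$, then $\nu=\chi^\sharp$ for some $\chi\in\mathcal A_\psi$. Moreover, $$\mathrm{Ind}_{H_0'}^{H'}(\widetilde\psi)\cong\bigoplus_{\chi\in\mathcal A_\psi}\chi^\sharp.$$
   Context: Let $p$ be a prime, $q$ a power of $p$, $\ell\ne p$, and $h\ge3$ an odd integer. For a commutative $\mathbb{F}_q$-algebra $A$, $U_h^{2,q}(A)$ is the set of formal expressions $1+\sum_{i=1}^{2(h-1)}a_i\tau^i$ ($a_i\in A$) with multiplication obtained by extending $(a\tau^i)(b\tau^j)=ab^{q^i}\tau^{i+j}$ bi-additively, $\tau^0=1$, $\tau^k=0$ for $k>2(h-1)$. In $\mathcal U=U_h^{2,q}(\mathbb{F}_{q^2})$ let $H_0'=\{1+\sum a_i\tau^i: a_i=0\text{ unless } i=2(h-1)\text{ or } i\text{ is odd with } i>h-1\}$ and $H'=\{1+\sum a_i\tau^i: a_i=0\text{ for all odd } i\le h-1\}$. Let $L=\mathbb{F}_{q^2}((\pi))$ and $U_L^i=1+\pi^i\mathbb{F}_{q^2}[[\pi]]$. An additive character $\psi\colon\mathbb{F}_{q^2}\to\overline{\mathbb{Q}}_\ell^\times$ has conductor $q^2$ if there exists $x$ with $\psi(x^q)\ne\psi(x)$; $\widetilde\psi(1+\sum a_i\tau^i)=\psi(a_{2(h-1)})$ on $H_0'$. $\mathcal A_\psi$ is the set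 of characters $\chi$ of $U_L^1/U_L^h$ with $\chi(1+a\pi^{h-1})=\psi(a)$ for all $a\in\mathbb{F}_{q^2}$. For $\chi\in\mathcal A_\psi$, $\chi^\sharp$ is the character of $H'$ given by $\chi^\sharp(1+\sum a_i\tau^i)=\chi(1+a_2\pi+a_4\pi^2+\cdots+a_{2(h-1)}\pi^{h-1})$. *)

From HB Require Import structures.
From mathcomp Require Import all_boot all_order all_algebra all_fingroup all_solvable all_field all_character.
Set Implicit Arguments. Unset Strict Implicit. Unset Printing Implicit Defensive.
Import Order.TTheory GRing.Theory Num.Theory.
Local Open Scope ring_scope.

(* N = 2(h-1): top exponent of tau in U_h^{2,q}. *)
Definition Nh (h : nat) : nat := (h.-1).*2.

Section Defs.
Variables (F : finFieldType) (q h : nat).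

(* Matrix model of U_h^{2,q}(F): the element 1 + sum_i a_i tau^i (a_0 = 1)
   is represented by the (N+1)x(N+1) matrix M with M i j = a_(j-i)^(q^i)
   for i <= j and 0 otherwise.  Row 0 of M is (1, a_1, ..., a_N), and
   M(x) M(y) = M(xy) for the twisted multiplication
   (a tau^i)(b tau^j) = a b^(q^i) tau^(i+j). *)
Definition isU (M : 'M[F]_((Nh h).+1)) : bool :=
  (M ord0 ord0 == 1) &&
  [forall i : 'I_((Nh h).+1), forall j : 'I_((Nh h).+1),
     M i j == (if (i <= j)%N then (M ord0 (inord (j - i))) ^+ (q ^ i) else 0)].

Definition Uset : {set {'GL_((Nh h).+1)[F]}} := [set g : {'GL_((Nh h).+1)[F]} | isU (GLval g)].

Definition Hpset : {set {'GL_((Nh h).+1)[F]}} :=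
  [set g in Uset | [forall j : 'I_((Nh h).+1),
     (odd j && (j <= h.-1)%N) ==> (GLval g ord0 j == 0)]].

Definition H0set : {set {'GL_((Nh h).+1)[F]}} :=
  [set g in Uset | [forall j : 'I_((Nh h).+1),
     [&& (0 < j)%N, (j != Nh h :> nat) & ~~ (odd j && (h.-1 < j)%N)]
       ==> (GLval g ord0 j == 0)]].

Definition Hp := <<Hpset>>%G.
Definition H0 := <<H0set>>%G.

(* Matrix model of U_L^1/U_L^h: 1 + b_1 pi + ... + b_(h-1) pi^(h-1)
   is the h x h upper unitriangular Toeplitz matrix with row 0
   equal to (1, b_1, ..., b_(h-1)). *)
Definition isT (M : 'M[F]_h.-1.+1) : bool :=
  (M ord0 ord0 == 1) &&
  [forall i : 'I_h.-1.+1, forall j : 'I_h.-1.+1,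
     M i j == (if (i <= j)%N then M ord0 (inord (j - i)) else 0)].

Definition Wset : {set {'GL_h[F]}} := [set w : {'GL_h[F]} | isT (GLval w)].
Definition W := <<Wset>>%G.

(* A_psi : (linear) characters chi of U_L^1/U_L^h with chi(1 + a pi^(h-1)) = psi a *)
Definition Apsi (psi : F -> algC) : {set Iirr W} :=
  [set i | ('chi[W]_i \is a linear_char) &&
     [forall w in Wset,
        [forall j : 'I_h.-1.+1, ((0 < j)%N && (j < h.-1)%N) ==> (GLval w ord0 j == 0)]
        ==> ('chi[W]_i w == psi (GLval w ord0 ord_max))]].

(* chi^sharp (1 + sum a_i tau^i) = chi(1 + a_2 pi + a_4 pi^2 + ... + a_(2(h-1)) pi^(h-1)) *)
Definition sharp (chi : 'CF(W)) (g : {'GL_((Nh h).+1)[F]}) : algC :=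
  if [pick w in Wset | [forall j : 'I_h.-1.+1,
        GLval w ord0 j == GLval g ord0 (inord (j.*2))]] is Some w
  then chi w else 0.

End Defs.

Arguments Uset : clear implicits.
Arguments Hpset : clear implicits.
Arguments H0set : clear implicits.
Arguments Hp : clear implicits.
Arguments H0 : clear implicits.
Arguments Wset : clear implicits.
Arguments W : clear implicits.
Arguments Apsi : clear implicits.
Arguments sharp : clear implicits.

From Pilot Require Import Defs.
From HB Require Import structures.
From mathcomp Require Import all_boot all_order all_algebra all_fingroup all_solvable all_field all_character.
From mathcomp Require Import zify.
Set Implicit Arguments. Unset Strict Implicit. Unset Printing Implicit Defensive.
Import Order.TTheory GRing.Theory Num.Theory.
Local Open Scope ring_scope.

(* Reading off the even coefficients, [1 + sum a_i tau^i |-> 1 + a_2 pi + ... + a_2(h-1) pi^(h-1)],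
   is a homomorphism from H' onto the abelian group W = U_L^1/U_L^h: in a product of two
   elements of H' every term involving an odd index at most h-1 vanishes, and tau^2m acts
   trivially on F_(q^2). Its kernel lies in H_0', and it maps H_0' onto the subgroup Z of
   elements 1 + a pi^(h-1), so psi~ is inflated from the linear character
   1 + a pi^(h-1) |-> psi(a) of Z. A character of H' extending psi~ is therefore linear and
   trivial on the kernel, hence inflated from a character of W extending psi, i.e. from some
   chi in A_psi. Likewise Ind_(H_0')^(H') psi~ is inflated from Ind_Z^W psi, and in the
   abelian group W Frobenius reciprocity makes the latter the sum of the chi in A_psi. *)

Lemma big_ord_double (V : nmodType) (G : nat -> V) d :
  \sum_(k < d.*2.+1) G k = \sum_(m < d.+1) G m.*2 + \sum_(m < d) G m.*2.+1.
Proof.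
elim: d => [|d IH]; first by rewrite !big_ord1 big_ord0 addr0.
rewrite doubleS (big_ord_recr d.*2.+2) (big_ord_recr d.*2.+1) IH.
rewrite [in RHS]big_ord_recr [X in _ = _ + X]big_ord_recr /= doubleS.
by rewrite -!addrA (addrC (G d.*2.+1)) (addrCA (\sum_(m < d) _)).
Qed.

(* When [tau^i x = phi i x tau^i],
   row [i] of [tmx phi a] holds the coordinates of [tau^i * \sum_d a d tau^d] modulo
   [tau^n.+1], so [tmx] turns the twisted convolution [tconv] into the matrix product;
   this is how Defs models U_h^(2,q) and U_L^1/U_L^h. *)
Record twist (R : nzRingType) := Twist {
  twist_fun :> nat -> R -> R;
  twistD : forall i x y, twist_fun i (x + y) = twist_fun i x + twist_fun i y;
  twistM : forall i x y, twist_fun i (x * y) = twist_fun i x * twist_fun i y;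
  twist1 : forall i, twist_fun i 1 = 1;
  twist_id : forall x, twist_fun 0 x = x;
  twist_comp : forall i k x, twist_fun i (twist_fun k x) = twist_fun (k + i) x }.

Definition id_twist (R : nzRingType) : twist R :=
  @Twist R (fun _ x => x) (fun _ _ _ => erefl) (fun _ _ _ => erefl)
    (fun _ => erefl) (fun _ => erefl) (fun _ _ _ => erefl).

Section TwistedToeplitz.
Variables (R : finComUnitRingType) (n : nat) (phi : twist R).

Definition tmx (a : nat -> R) : 'M[R]_n.+1 :=
  \matrix_(i, j) if (i <= j)%N then phi i (a (j - i)%N) else 0.

Definition tconv (a b : nat -> R) (d : nat) : R :=
  \sum_(k < d.+1) a k * phi k (b (d - k)%N).

Definition tcoef (M : 'M[R]_n.+1) (j : nat) : R := M ord0 (inord j).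

Definition is_tmx (M : 'M[R]_n.+1) : bool :=
  [forall i, forall j, M i j == if (i <= j)%N then phi i (tcoef M (j - i)) else 0].

Lemma tcoef_ord M (j : 'I_n.+1) : tcoef M j = M ord0 j.
Proof. by rewrite /tcoef inord_val. Qed.

Lemma twist0 i : phi i 0 = 0.
Proof. by apply: (addrI (phi i 0)); rewrite -twistD !addr0. Qed.

Lemma eq_tmx a b : (forall d, (d <= n)%N -> a d = b d) -> tmx a = tmx b.
Proof.
move=> eq_ab; apply/matrixP => i j; rewrite !mxE; case: leqP => // le_ij.
by rewrite eq_ab // (leq_trans (leq_subr _ _)) // -ltnS.
Qed.

Lemma tcoef_tmx a j : (j <= n)%N -> tcoef (tmx a) j = a j.
Proof. by move=> le_jn; rewrite /tcoef mxE inordK // subn0 twist_id. Qed.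

Lemma is_tmxP M : reflect (M = tmx (tcoef M)) (is_tmx M).
Proof.
apply: (iffP forallP) => [tM | ->].
  by apply/matrixP => i j; rewrite mxE; apply/eqP/(forallP (tM i)).
move=> i; apply/forallP => j; rewrite {1}mxE; case: leqP => // le_ij.
by rewrite tcoef_tmx // (leq_trans (leq_subr _ _)) // -ltnS.
Qed.

Lemma mul_tmx a b : tmx a *m tmx b = tmx (tconv a b).
Proof.
apply/matrixP => i j; rewrite !mxE; under eq_bigr do rewrite !mxE.
case: (leqP i j) => le_ij; last first.
  apply: big1 => k _; case: (leqP i k) => le_ik; last by rewrite mul0r.
  by rewrite leqNgt (leq_trans le_ij le_ik) mulr0.
rewrite -(big_mkord xpredT (fun k : nat =>
  (if (i <= k)%N then phi i (a (k - i)%N) else 0) * (if (k <= j)%N then phi k (b (j - k)%N) else 0))).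
rewrite (@big_cat_nat _ _ _ i) //=; last exact: ltnW.
rewrite big1_seq ?add0r; last first.
  by move=> k /andP[_]; rewrite mem_index_iota => /andP[_ lt_ki]; rewrite leqNgt lt_ki mul0r.
rewrite (@big_cat_nat _ _ _ j.+1) //=.
rewrite [X in _ + X]big1_seq ?addr0; last first.
  by move=> k /andP[_]; rewrite mem_index_iota => /andP[lt_jk _]; rewrite (leqNgt k j) lt_jk mulr0.
rewrite /tconv (big_morph _ (twistD phi i) (twist0 i)).
rewrite -(big_mkord xpredT (fun k => phi i (a k * phi k (b (j - i - k)%N)))).
rewrite -{1}[i : nat]add0n big_addn subSn // big_nat_cond [RHS]big_nat_cond.
apply: eq_bigr => k /andP[/andP[_ lt_k] _].
rewrite leq_addl addnK twistM twist_comp -subnDA (addnC i k) ifT //; lia.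
exact: leqW.
Qed.

Lemma tmx_delta : tmx (fun d => (d == 0%N)%:R) = 1.
Proof.
apply/matrixP => i j; rewrite !mxE subn_eq0 -val_eqE /= eqn_leq.
by case: leqP => // _; case: (j <= i)%N; rewrite ?twist1 ?twist0.
Qed.

Lemma tconv0 a b : a 0%N = 1 -> b 0%N = 1 -> tconv a b 0 = 1.
Proof. by move=> a0 b0; rewrite /tconv big_ord1 a0 subn0 b0 twist1 mulr1. Qed.

Lemma tconv_gap a b d : (0 < d)%N -> a 0%N = 1 -> b 0%N = 1 ->
    (forall k, (0 < k < d)%N -> a k = 0 /\ b k = 0) ->
  tconv a b d = a d + b d.
Proof.
move=> d_gt0 a0 b0 gap; rewrite /tconv (bigD1 ord0) // (bigD1 ord_max) /=; last first.
  by rewrite -val_eqE /= -lt0n.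
rewrite big1 ?addr0 => [|k /andP[k0 kd]].
  by rewrite subn0 subnn a0 b0 mul1r twist_id twist1 mulr1 addrC.
have /gap[-> _] : (0 < k < d)%N; last by rewrite mul0r.
by have := ltn_ord k; move: k0 kd; rewrite -!val_eqE /=; lia.
Qed.

Lemma tmx_unit a : a 0%N = 1 -> tmx a \in unitmx.
Proof.
move=> a0; rewrite unitmxE -det_tr det_trig.
  by rewrite big1 ?unitr1 // => i _; rewrite !mxE leqnn subnn a0 twist1.
by apply/forallP => i; apply/forallP => j; apply/implyP => lt_ij; rewrite !mxE leqNgt lt_ij.
Qed.

Definition gltmx (a : nat -> R) : {'GL_n.+1[R]} := insubd (1%g : {'GL_n.+1[R]}) (tmx a).

Lemma gltmxK a : a 0%N = 1 -> GLval (gltmx a) = tmx a.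
Proof. by move=> a0; rewrite /gltmx insubdK //; apply: tmx_unit. Qed.

End TwistedToeplitz.

Lemma linear_char_of_hom (gT : finGroupType) (G : {group gT}) (mu : gT -> algC) :
    mu 1%g = 1 -> {in G &, {morph mu : x y / (x * y)%g >-> x * y}} ->
  exists2 xi : 'CF(G), xi \is a linear_char & {in G, xi =1 mu}.
Proof.
move=> mu1 muM; pose r x : 'M[algC]_1 := (mu x)%:M.
have rG : mx_repr G r by split=> [|x y Gx Gy]; rewrite /r ?mu1 // muM // scalar_mxM.
exists (cfRepr (MxRepresentation rG)).
  by rewrite qualifE/= cfRepr_char cfunE group1 /= /r mu1 mxtrace1 mulr1n /=.
by move=> x Gx; rewrite cfunE Gx /= /r mxtrace_scalar mulr1n.
Qed.

Section Inflation.
Variables (gT rT : finGroupType) (G H : {group gT}) (W : {group rT}).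
Variable f : {morphism G >-> rT}.
Hypotheses (sHG : H \subset G) (sKH : ('ker f)%g \subset H) (imfG : (f @* G)%g = W).

Lemma lin_char_factor (nu : 'CF(G)) :
    nu \is a linear_char -> ('ker f)%g \subset cfker nu ->
  exists2 xi : 'CF(W), xi \is a linear_char & {in G, forall g, nu g = xi (f g)}.
Proof.
move=> nuL sKnu.
have nu_fibre g1 g2 : g1 \in G -> g2 \in G -> f g1 = f g2 -> nu g1 = nu g2.
  move=> Gg1 Gg2 eqf; have Kg : (g1^-1 * g2)%g \in ('ker f)%g.
    by apply/kerP; rewrite ?groupM ?groupV // morphM ?groupV // morphV // eqf mulVg.
  by rewrite -(mulKVg g1 g2) cfkerMr // (subsetP sKnu).
pose mu w := nu (odflt 1%g [pick g in G | f g == w]).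
have muE g : g \in G -> mu (f g) = nu g.
  rewrite /mu => Gg; case: pickP => [g' /andP[Gg' /eqP eqf] | /(_ g)]; last by rewrite Gg eqxx.
  exact: nu_fibre.
have [xi xiL xiE] : exists2 xi : 'CF(W), xi \is a linear_char & {in W, xi =1 mu}.
  apply: linear_char_of_hom => [|w1 w2]; first by rewrite -(morph1 f) muE // lin_char1.
  rewrite -imfG => /morphimP[g1 _ Gg1 ->] /morphimP[g2 _ Gg2 ->].
  by rewrite -morphM // !muE ?groupM // lin_charM.
by exists xi => // g Gg; rewrite xiE ?muE // -imfG mem_morphim.
Qed.

Variable lam : 'CF(f @* H).
Hypothesis lamL : lam \is a linear_char.

Lemma char_factor_inflation (nu : 'CF(G)) :
    nu \is a character -> {in H, forall g, nu g = lam (f g)} ->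
  exists2 i : Iirr W, 'Res[f @* H] 'chi_i = lam & {in G, forall g, nu g = 'chi_i (f g)}.
Proof.
move=> nuC nuE.
have nuL : nu \is a linear_char by rewrite qualifE/= nuC nuE // (morph1 f) (lin_char1 lamL) eqxx.
have sKnu : ('ker f)%g \subset cfker nu.
  apply/subsetP => k Kk; have Hk := subsetP sKH k Kk.
  by rewrite cfkerEchar // inE (subsetP sHG) //= nuE // (mker Kk) (lin_char1 lamL) (lin_char1 nuL).
have [xi xiL xiE] := lin_char_factor nuL sKnu.
have /irrP[i xi_i] := lin_char_irr xiL; rewrite {}xi_i in xiE.
exists i => //; apply/cfun_inP => _ /morphimP[g _ Hg ->].
have [Gg sZW] : g \in G /\ (f @* H)%g \subset W by rewrite -imfG morphimS // (subsetP sHG).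
by rewrite cfResE ?mem_morphim // -(xiE g Gg) (nuE g Hg).
Qed.

Lemma cfInd_inflation_abelian (phi : 'CF(H)) :
    abelian W -> {in H, forall g, phi g = lam (f g)} ->
  {in G, forall g, ('Ind[G] phi) g = \sum_(i | 'Res[f @* H] 'chi[W]_i == lam) 'chi_i (f g)}.
Proof.
move=> abW phiE g Gg.
have -> : phi = cfMorph lam by apply/cfun_inP => x Hx; rewrite cfMorphE ?phiE.
rewrite cfIndMorph // cfMorphE // imfG (cfun_sum_cfdot ('Ind[W] lam)) sum_cfunE [RHS]big_mkcond.
apply: eq_bigr => i _; rewrite cfunE -Frobenius_reciprocity.
have resL : 'Res[f @* H] 'chi[W]_i \is a linear_char.
  by apply: cfRes_lin_char; move/char_abelianP: abW; apply.
have /irrP[a lam_a] := lin_char_irr lamL.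
have /irrP[b res_b] := lin_char_irr resL.
by rewrite lam_a res_b cfdot_irr (inj_eq irr_inj) eq_sym; case: eqP; rewrite ?mul1r ?mul0r.
Qed.

End Inflation.

Section UnipotentModel.
Variables (F : finFieldType) (q h : nat).
Hypotheses (frobD : forall i (x y : F), (x + y) ^+ (q ^ i) = x ^+ (q ^ i) + y ^+ (q ^ i))
  (frob2 : forall x : F, x ^+ (q ^ 2) = x) (h_ge3 : (3 <= h)%N).

Fact frob_comp i k (x : F) : (x ^+ (q ^ k)) ^+ (q ^ i) = x ^+ (q ^ (k + i)).
Proof. by rewrite -exprM expnD. Qed.

Definition frob : twist F :=
  @Twist F (fun i x => x ^+ (q ^ i)) frobD (fun i x y => exprMn _ _ _)
    (fun i => expr1n _ _) (@expr1 F) frob_comp.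

Lemma frob_double m x : frob m.*2 x = x.
Proof. by elim: m => // m IH; rewrite doubleS -addn2 -twist_comp IH; apply: frob2. Qed.

Local Notation N := (Nh h).
Local Notation GLU := {'GL_N.+1[F]}.
Local Notation GLW := {'GL_h[F]}.
Local Notation tmxU := (@tmx F N frob).
Local Notation tmxW := (@tmx F h.-1 (id_twist F)).

Definition ucoef (g : GLU) : nat -> F := tcoef (GLval g).
Definition wcoef (w : GLW) : nat -> F := tcoef (GLval w).

Lemma ucoef_ord (g : GLU) (j : 'I_N.+1) : ucoef g j = GLval g ord0 j.
Proof. exact: tcoef_ord. Qed.

Lemma wcoef_ord (w : GLW) (j : 'I_h.-1.+1) : wcoef w j = GLval w ord0 j.
Proof. exact: tcoef_ord. Qed.

Lemma UsetP (g : GLU) : reflect (GLval g = tmxU (ucoef g) /\ ucoef g 0 = 1) (g \in Uset F q h).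
Proof.
have -> : g \in Uset F q h = (ucoef g 0 == 1) && is_tmx frob (GLval g).
  by rewrite inE /isU /ucoef /tcoef (_ : inord 0 = ord0) //; apply/val_inj/inordK.
by apply: (iffP andP) => [[/eqP g0 /is_tmxP] | [/is_tmxP gU /eqP]].
Qed.

Lemma ucoef0 (g : GLU) : g \in Uset F q h -> ucoef g 0 = 1.
Proof. by case/UsetP. Qed.

Lemma tmx_Uset (g : GLU) a : GLval g = tmxU a -> a 0%N = 1 -> g \in Uset F q h.
Proof.
move=> gE a0; have ucoefE : ucoef g 0 = a 0%N by rewrite /ucoef gE tcoef_tmx.
apply/UsetP; split; last by rewrite ucoefE.
by rewrite gE; apply/eq_tmx => d le_dN; rewrite /ucoef gE tcoef_tmx.
Qed.

Lemma WsetP (w : GLW) : reflect (GLval w = tmxW (wcoef w) /\ wcoef w 0 = 1) (w \in Wset F h).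
Proof.
have -> : w \in Wset F h = (wcoef w 0 == 1) && is_tmx (id_twist F) (GLval w).
  by rewrite inE /isT /wcoef /tcoef (_ : inord 0 = ord0) //; apply/val_inj/inordK.
by apply: (iffP andP) => [[/eqP w0 /is_tmxP] | [/is_tmxP wT /eqP]].
Qed.

Lemma tmx_Wset (w : GLW) a : GLval w = tmxW a -> a 0%N = 1 -> w \in Wset F h.
Proof.
move=> wE a0; have wcoefE : wcoef w 0 = a 0%N by rewrite /wcoef wE tcoef_tmx.
apply/WsetP; split; last by rewrite wcoefE.
by rewrite wE; apply/eq_tmx => d le_dh; rewrite /wcoef wE tcoef_tmx.
Qed.

Lemma mulU_tmx (g1 g2 : GLU) : g1 \in Uset F q h -> g2 \in Uset F q h ->
  GLval (g1 * g2)%g = tmxU (tconv frob (ucoef g1) (ucoef g2)).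
Proof. by move=> /UsetP[g1E _] /UsetP[g2E _]; rewrite GL_MxE g1E g2E mul_tmx. Qed.

Lemma UsetM (g1 g2 : GLU) : g1 \in Uset F q h -> g2 \in Uset F q h -> (g1 * g2)%g \in Uset F q h.
Proof.
move=> U1 U2; apply: tmx_Uset (mulU_tmx U1 U2) _.
by apply: tconv0; [case/UsetP: U1 | case/UsetP: U2].
Qed.

Lemma ucoefM (g1 g2 : GLU) j : g1 \in Uset F q h -> g2 \in Uset F q h -> (j <= N)%N ->
  ucoef (g1 * g2)%g j = tconv frob (ucoef g1) (ucoef g2) j.
Proof. by move=> U1 U2 le_jN; rewrite /ucoef (mulU_tmx U1 U2) tcoef_tmx. Qed.

Lemma Uset1 : (1%g : GLU) \in Uset F q h.
Proof. by apply: (@tmx_Uset _ (fun d => (d == 0%N)%:R)); rewrite ?GL_1E ?tmx_delta. Qed.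

Lemma ucoef1 j : (j <= N)%N -> ucoef 1%g j = (j == 0%N)%:R.
Proof. by move=> le_jN; rewrite /ucoef GL_1E -(tmx_delta _ frob) tcoef_tmx. Qed.

Lemma mulW_tmx (w1 w2 : GLW) : w1 \in Wset F h -> w2 \in Wset F h ->
  GLval (w1 * w2)%g = tmxW (tconv (id_twist F) (wcoef w1) (wcoef w2)).
Proof. by move=> /WsetP[w1E _] /WsetP[w2E _]; rewrite GL_MxE w1E w2E mul_tmx. Qed.

Lemma Wset_comm (w1 w2 : GLW) : w1 \in Wset F h -> w2 \in Wset F h -> commute w1 w2.
Proof.
move=> W1 W2; apply: val_inj; change (GLval (w1 * w2)%g = GLval (w2 * w1)%g).
rewrite (mulW_tmx W1 W2) (mulW_tmx W2 W1).
apply: eq_tmx => d _; rewrite /tconv (reindex_inj rev_ord_inj).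
by apply: eq_bigr => -[k /= lt_kd] _; rewrite subSS subKn 1?mulrC // -ltnS.
Qed.

Lemma HpP (g : GLU) : reflect (g \in Uset F q h /\
    forall j, (j <= N)%N -> odd j -> (j <= h.-1)%N -> ucoef g j = 0)
  (g \in Hpset F q h).
Proof.
rewrite [g \in Hpset _ _ _]inE; apply: (iffP andP) => -[U gE]; split => //.
  move=> j le_jN odd_j le_jh; move/forallP/(_ (Ordinal (le_jN : (j < N.+1)%N))): gE.
  by rewrite /= odd_j le_jh -ucoef_ord => /eqP.
apply/forallP => j; apply/implyP => /andP[odd_j le_jh].
by rewrite -ucoef_ord gE // -ltnS.
Qed.

Lemma H0P (g : GLU) : reflect (g \in Uset F q h /\
    forall j, (j <= N)%N -> (0 < j)%N -> j != N -> ~~ (odd j && (h.-1 < j)%N) -> ucoef g j = 0)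
  (g \in H0set F q h).
Proof.
rewrite [g \in H0set _ _ _]inE; apply: (iffP andP) => -[U gE]; split => //.
  move=> j le_jN j_gt0 j_neqN j_even; move/forallP/(_ (Ordinal (le_jN : (j < N.+1)%N))): gE.
  by rewrite /= j_gt0 j_neqN j_even -ucoef_ord => /eqP.
apply/forallP => j; apply/implyP => /and3P[j_gt0 j_neqN j_even].
by rewrite -ucoef_ord gE // -ltnS.
Qed.

Lemma Hpset_group : group_set (Hpset F q h).
Proof.
apply/group_setP; split.
  by apply/HpP; split=> [|j le_jN odd_j _]; rewrite ?Uset1 ?ucoef1 //; case: eqP odd_j => // ->.
move=> g1 g2 /HpP[U1 g1E] /HpP[U2 g2E]; apply/HpP; split; first exact: UsetM.
move=> j le_jN odd_j le_jh; rewrite ucoefM //.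
apply: big1 => k _; have := ltn_ord k; rewrite ltnS => le_kj.
have [odd_k | even_k] := boolP (odd k); first by rewrite g1E ?mul0r //; lia.
by rewrite g2E ?twist0 ?mulr0 ?oddB ?odd_j ?(negPf even_k) //; lia.
Qed.

Lemma H0set_group : group_set (H0set F q h).
Proof.
apply/group_setP; split.
  by apply/H0P; split=> [|j le_jN j_gt0 _ _]; rewrite ?Uset1 ?ucoef1 // eqn0Ngt j_gt0.
move=> g1 g2 /H0P[U1 g1E] /H0P[U2 g2E]; apply/H0P; split; first exact: UsetM.
move=> j le_jN j_gt0 j_neqN j_even; rewrite ucoefM //.
apply: big1 => k _; have := ltn_ord k; rewrite ltnS => le_kj.
have [-> | k_gt0] := posnP k; first by rewrite ucoef0 // mul1r twist_id subn0 g2E.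
have [lt_kj | ge_kj] := ltnP k j; last first.
  have -> : val k = j by apply/eqP; rewrite eqn_leq le_kj ge_kj.
  by rewrite subnn ucoef0 // twist1 mulr1 g1E.
have k_neqN : val k != N by rewrite ltn_eqF // (leq_trans lt_kj le_jN).
have [/andP[odd_k lt_hk] | k_even] := boolP (odd k && (h.-1 < k)%N); last first.
  by rewrite g1E ?mul0r //; apply: leq_trans le_jN; apply: ltnW.
have odd_j : odd j = false by apply/negbTE; apply: contra j_even => ->; apply: ltn_trans lt_kj.
have odd_jk : odd (j - k) by rewrite oddB ?odd_j ?odd_k // ltnW.
have lt_jkh : (j - k < h.-1)%N by move: le_jN; rewrite /Nh; lia.
by rewrite g2E ?twist0 ?mulr0 ?subn_gt0 ?ltn_eqF ?odd_jk /= -?ltnNge //;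
  rewrite /Nh in le_jN *; lia.
Qed.

Lemma mem_Hp (g : GLU) : (g \in Hp F q h) = (g \in Hpset F q h).
Proof. by rewrite /Hp /= gen_set_id //; apply: Hpset_group. Qed.

Lemma mem_H0 (g : GLU) : (g \in H0 F q h) = (g \in H0set F q h).
Proof. by rewrite /H0 /= gen_set_id //; apply: H0set_group. Qed.

Lemma H0_sub_Hp : H0 F q h \subset Hp F q h.
Proof.
apply/subsetP => g; rewrite mem_H0 mem_Hp => /H0P[U gE]; apply/HpP; split=> // j le_jN odd_j le_jh.
by apply: gE; rewrite ?odd_gt0 ?odd_j ?(leqNgt j) ?le_jh ?andbF ?ltn_eqF //; rewrite /Nh; lia.
Qed.

Definition even_part (g : GLU) : GLW := @gltmx F h.-1 (id_twist F) (fun j => ucoef g j.*2).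

Definition spread (w : GLW) : GLU :=
  @gltmx F N frob (fun d => if odd d then 0 else wcoef w d./2).

Lemma even_part_tmx (g : GLU) : g \in Uset F q h ->
  GLval (even_part g) = tmxW (fun j => ucoef g j.*2).
Proof. by move=> U; apply: gltmxK; rewrite /= ucoef0. Qed.

Lemma even_part_Wset (g : GLU) : g \in Uset F q h -> even_part g \in Wset F h.
Proof. by move=> U; apply: tmx_Wset (even_part_tmx U) _; rewrite /= ucoef0. Qed.

Lemma wcoef_even_part (g : GLU) j : g \in Uset F q h -> (j <= h.-1)%N ->
  wcoef (even_part g) j = ucoef g j.*2.
Proof. by move=> U le_jh; rewrite /wcoef (even_part_tmx U) tcoef_tmx. Qed.

Lemma even_part_top (g : GLU) : g \in Uset F q h ->
  GLval (even_part g) ord0 ord_max = GLval g ord0 ord_max.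
Proof. by move=> U; rewrite -wcoef_ord -ucoef_ord wcoef_even_part. Qed.

Lemma even_partM (g1 g2 : GLU) : g1 \in Hpset F q h -> g2 \in Hpset F q h ->
  even_part (g1 * g2)%g = (even_part g1 * even_part g2)%g.
Proof.
move=> /HpP[U1 g1E] /HpP[U2 g2E]; apply: val_inj.
change (GLval (even_part (g1 * g2)%g) = GLval (even_part g1 * even_part g2)%g).
rewrite GL_MxE !even_part_tmx ?UsetM // mul_tmx; apply: eq_tmx => d le_dh.
rewrite ucoefM //; last by rewrite /Nh; lia.
rewrite /tconv (big_ord_double (fun k => ucoef g1 k * frob k (ucoef g2 (d.*2 - k)))).
rewrite [X in _ + X]big1 ?addr0 => [|m _]; last first.
  have lt_md := ltn_ord m; have [le_mh | lt_hm] := leqP m.*2.+1 h.-1.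
    by rewrite g1E ?mul0r //= ?odd_double // /Nh; lia.
  by rewrite g2E ?twist0 ?mulr0 ?oddB ?odd_double // /Nh; lia.
by apply: eq_bigr => m _; rewrite frob_double -doubleB.
Qed.

Lemma spread_tmx (w : GLW) : w \in Wset F h ->
  GLval (spread w) = tmxU (fun d => if odd d then 0 else wcoef w d./2).
Proof. by case/WsetP => _ w0; rewrite gltmxK //= w0. Qed.

Lemma spread_Hpset (w : GLW) : w \in Wset F h -> spread w \in Hpset F q h.
Proof.
move=> W; have U : spread w \in Uset F q h by apply: tmx_Uset (spread_tmx W) _; case/WsetP: W.
by apply/HpP; split=> // j le_jN odd_j _; rewrite /ucoef (spread_tmx W) tcoef_tmx // odd_j.
Qed.

Lemma even_part_spread (w : GLW) : w \in Wset F h -> even_part (spread w) = w.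
Proof.
move=> W; have U := HpP _ (spread_Hpset W); apply: val_inj.
change (GLval (even_part (spread w)) = GLval w); case/WsetP: (W) => -> _.
rewrite even_part_tmx; last by case: U.
apply: eq_tmx => d le_dh; rewrite /ucoef (spread_tmx W) tcoef_tmx ?odd_double ?doubleK //.
by rewrite /Nh; lia.
Qed.

(* The image in [W] of the elements [1 + a pi^(h-1)], phrased exactly as in [Apsi]. *)
Definition mid_zero (w : GLW) : bool :=
  [forall j : 'I_h.-1.+1, ((0 < j)%N && (j < h.-1)%N) ==> (GLval w ord0 j == 0)].

Lemma mid_zeroP (w : GLW) :
  reflect (forall j, (0 < j < h.-1)%N -> wcoef w j = 0) (mid_zero w).
Proof.
apply: (iffP forallP) => [wE j /andP[j_gt0 lt_jh] | wE j]; last first.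
  by apply/implyP => /wE; rewrite wcoef_ord => ->.
have lt_jh1 : (j < h.-1.+1)%N by apply: ltnW.
by move/implyP: (wE (Ordinal lt_jh1)); rewrite /= j_gt0 lt_jh -wcoef_ord => /(_ isT)/eqP.
Qed.

Lemma spread_H0set (w : GLW) : w \in Wset F h -> mid_zero w -> spread w \in H0set F q h.
Proof.
move=> W /mid_zeroP wE; have /HpP[U _] := spread_Hpset W.
apply/H0P; split=> // j le_jN j_gt0 j_neqN j_odd.
rewrite /ucoef (spread_tmx W) tcoef_tmx //; case: ifP => // even_j.
rewrite wE //; move: le_jN j_neqN j_gt0; rewrite /Nh -[j]odd_double_half even_j /=.
by rewrite add0n => ? /eqP ? ?; lia.
Qed.

Lemma even_part_mid_zero (g : GLU) : g \in H0set F q h -> mid_zero (even_part g).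
Proof.
case/H0P => U gE; apply/mid_zeroP => j /andP[j_gt0 lt_jh].
by rewrite wcoef_even_part ?gE ?odd_double // ?ltn_eqF ?double_gt0 /Nh; lia.
Qed.

Lemma even_part_eq1_H0set (g : GLU) : g \in Hpset F q h -> even_part g = 1%g -> g \in H0set F q h.
Proof.
case/HpP => U gE g1; apply/H0P; split=> // j le_jN j_gt0 j_neqN j_even.
have [odd_j | even_j] := boolP (odd j); first by apply: gE; move: j_even; rewrite odd_j -leqNgt.
have le_jh : (j./2 <= h.-1)%N by move: le_jN; rewrite /Nh; lia.
rewrite -[j]odd_double_half (negPf even_j) -wcoef_even_part // g1.
rewrite /wcoef GL_1E -(tmx_delta _ (id_twist F)) tcoef_tmx //.
move: j_gt0; rewrite -[j in (0 < j)%N]odd_double_half (negPf even_j) add0n double_gt0 lt0n.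
by move=> /negPf ->.
Qed.

Lemma mid_zero_topM (w1 w2 : GLW) : w1 \in Wset F h -> w2 \in Wset F h ->
    mid_zero w1 -> mid_zero w2 ->
  GLval (w1 * w2)%g ord0 ord_max = GLval w1 ord0 ord_max + GLval w2 ord0 ord_max.
Proof.
move=> W1 W2 /mid_zeroP w1E /mid_zeroP w2E; rewrite -!wcoef_ord.
rewrite /wcoef (mulW_tmx W1 W2) tcoef_tmx // tconv_gap //.
- by rewrite /=; lia.
- by case/WsetP: W1.
- by case/WsetP: W2.
by move=> k /= k_mid; rewrite w1E ?w2E.
Qed.

Lemma sharp_even_part (chi : 'CF(W F h)) (g : GLU) : g \in Uset F q h ->
  sharp F h chi g = chi (even_part g).
Proof.
move=> U; rewrite /sharp; case: pickP => [w /andP[W /forallP wE] | no_w]; last first.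
  move/negbT/negP: (no_w (even_part g)); rewrite even_part_Wset //; case.
  by apply/forallP => j; rewrite -wcoef_ord wcoef_even_part // -ltnS ltn_ord.
congr (chi _); apply: val_inj; change (GLval w = GLval (even_part g)).
case/WsetP: W => -> _; rewrite even_part_tmx //; apply: eq_tmx => d le_dh.
have := wE (inord d); rewrite -wcoef_ord -ucoef_ord inordK ?ltnS // => /eqP ->.
by rewrite inordK //; rewrite /Nh; lia.
Qed.

Lemma even_part_morphM : {in Hp F q h &, {morph even_part : x y / (x * y)%g >-> (x * y)%g}}.
Proof. by move=> g1 g2; rewrite !mem_Hp; apply: even_partM. Qed.

Definition even_part_morph : {morphism Hp F q h >-> GLW} := Morphism even_part_morphM.

Lemma Hp_Uset (g : GLU) : g \in Hp F q h -> g \in Uset F q h.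
Proof. by rewrite mem_Hp => /HpP[]. Qed.

Lemma im_even_part : (even_part_morph @* Hp F q h)%g = W F h.
Proof.
apply/eqP; rewrite eqEsubset; apply/andP; split.
  apply/subsetP => _ /morphimP[g _ Hg ->]; exact/mem_gen/even_part_Wset/Hp_Uset.
rewrite gen_subG; apply/subsetP => w W; rewrite -(even_part_spread W).
by apply: (mem_morphim even_part_morph); rewrite mem_Hp spread_Hpset.
Qed.

Lemma im_even_part_H0 (w : GLW) :
  (w \in (even_part_morph @* H0 F q h)%g) = (w \in Wset F h) && mid_zero w.
Proof.
apply/idP/andP => [/morphimP[g _ H0g ->] | [W mid_w]].
  have U := Hp_Uset (subsetP H0_sub_Hp g H0g).
  by rewrite /= even_part_Wset // even_part_mid_zero // -mem_H0.
rewrite -(even_part_spread W); apply: (mem_morphim even_part_morph).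
  by rewrite mem_Hp spread_Hpset.
by rewrite mem_H0 spread_H0set.
Qed.

Lemma ker_even_part : ('ker even_part_morph)%g \subset H0 F q h.
Proof.
apply/subsetP => g Kg; have Hg := dom_ker Kg.
by rewrite mem_H0 even_part_eq1_H0set -?mem_Hp // -[even_part g]/(even_part_morph g) (mker Kg).
Qed.

Lemma W_abelian : abelian (W F h).
Proof. by rewrite abelian_gen; apply/centsP => w1 W1 w2 W2; apply: Wset_comm. Qed.

Lemma top_coef1 : GLval (1%g : GLW) ord0 ord_max = 0.
Proof.
by rewrite GL_1E mxE (_ : ord0 == ord_max = false) //; apply/negbTE; rewrite -val_eqE /=; lia.
Qed.

Section TopCharacter.
Variable psi : F -> algC.
Hypotheses (psiD : forall x y, psi (x + y) = psi x * psi y) (psi0 : psi 0 = 1).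

Lemma top_linear_char : exists2 lam : 'CF(even_part_morph @* H0 F q h),
  lam \is a linear_char &
  {in (even_part_morph @* H0 F q h)%g, forall w, lam w = psi (GLval w ord0 ord_max)}.
Proof.
apply: linear_char_of_hom => [|w1 w2]; first by rewrite top_coef1.
by rewrite !im_even_part_H0 => /andP[W1 mid1] /andP[W2 mid2]; rewrite mid_zero_topM.
Qed.

Lemma Apsi_res (lam : 'CF(even_part_morph @* H0 F q h)) (i : Iirr (W F h)) :
    {in (even_part_morph @* H0 F q h)%g, forall w, lam w = psi (GLval w ord0 ord_max)} ->
  (i \in Apsi F h psi) = ('Res[even_part_morph @* H0 F q h] 'chi_i == lam).
Proof.
move=> lamE; have sZW : (even_part_morph @* H0 F q h)%g \subset W F h.
  by rewrite -im_even_part morphimS // H0_sub_Hp.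
have chiL : 'chi[W F h]_i \is a linear_char by move/char_abelianP: W_abelian.
rewrite inE chiL /=; apply/forallP/eqP => [chiE | resE w].
  apply/cfun_inP => w Zw; rewrite cfResE // lamE //.
  move: Zw; rewrite im_even_part_H0 => /andP[W mid_w].
  by move/(_ w)/implyP/(_ W)/implyP/(_ mid_w)/eqP: chiE.
apply/implyP => W; apply/implyP => mid_w; have Zw : w \in (even_part_morph @* H0 F q h)%g.
  by rewrite im_even_part_H0 W.
by rewrite -lamE // -resE cfResE.
Qed.

End TopCharacter.

End UnipotentModel.

Unset Implicit Arguments.

Theorem lemma2p6 (p k h : nat) (F : finFieldType) (psi : F -> algC) :
  prime p -> (0 < k)%N -> #|F| = ((p ^ k) ^ 2)%N ->
  odd h -> (3 <= h)%N ->
  (forall x y : F, psi (x + y) = psi x * psi y) -> psi 0 = 1 ->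
  (exists x : F, psi (x ^+ (p ^ k)) != psi x) ->
  forall phi : 'CF(H0 F (p ^ k) h),
    (forall g, g \in H0 F (p ^ k) h -> phi g = psi (GLval g ord0 ord_max)) ->
    (forall nu : 'CF(Hp F (p ^ k) h), nu \is a character ->
       'Res[H0 F (p ^ k) h] nu = phi ->
       exists2 i, i \in Apsi F h psi &
         forall g, g \in Hp F (p ^ k) h -> nu g = sharp F h 'chi[W F h]_i g)
    /\
    (forall g, g \in Hp F (p ^ k) h ->
       ('Ind[Hp F (p ^ k) h] phi) g = \sum_(i in Apsi F h psi) sharp F h 'chi[W F h]_i g).
Proof.
move=> p_pr _ cardF _ h_ge3 psiD psi0 _ phi phiE.
have pF : p \in [pchar F] by apply: card_finPcharP p_pr; rewrite cardF -expnM.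
have frobD i (x y : F) : (x + y) ^+ ((p ^ k) ^ i) = x ^+ ((p ^ k) ^ i) + y ^+ ((p ^ k) ^ i).
  by apply: exprDn_pchar; rewrite (eq_pnat _ (pcharf_eq pF)) !pnatX pnat_id.
have frob2 (x : F) : x ^+ ((p ^ k) ^ 2) = x by rewrite -cardF expf_card.
pose f := even_part_morph frobD frob2 h_ge3.
have sH0 : H0 F (p ^ k) h \subset Hp F (p ^ k) h by apply: H0_sub_Hp.
have sKH0 : ('ker f)%g \subset H0 F (p ^ k) h by apply: ker_even_part.
have imf : (f @* Hp F (p ^ k) h)%g = W F h by apply: im_even_part.
have HpU g : g \in Hp F (p ^ k) h -> g \in Uset F (p ^ k) h by apply: Hp_Uset.
have sharpE chi g : g \in Hp F (p ^ k) h -> sharp F h chi g = chi (f g).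
  by move/HpU; apply: sharp_even_part.
have [lam lamL lamE] := top_linear_char frobD frob2 h_ge3 psiD psi0.
have Apsi_lam i := Apsi_res i lamE.
have phi_lam : {in H0 F (p ^ k) h, forall g, phi g = lam (f g)}.
  move=> g H0g; have Hg := subsetP sH0 g H0g.
  by rewrite lamE ?mem_morphim // phiE // (even_part_top frobD) ?HpU.
split=> [nu nuC nu_phi | g Hg].
  have nu_lam : {in H0 F (p ^ k) h, forall g, nu g = lam (f g)}.
    by move=> g H0g; rewrite -phi_lam // -nu_phi cfResE.
  have [i res_i nuE] := char_factor_inflation sH0 sKH0 imf lamL nuC nu_lam.
  exists i => [|g Hg]; first by rewrite Apsi_lam res_i.
  by rewrite nuE // sharpE.
rewrite (cfInd_inflation_abelian sH0 sKH0 imf lamL _ phi_lam) //; last by apply: W_abelian.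
by apply: eq_big => [i | i _]; rewrite ?Apsi_lam // sharpE.
Qed.
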